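(* Let $x,y,z:(-\infty,0]\to[0,\infty)$ be absolutely continuous functions with $x+y+z>0$ everywhere, $\liminf_{s\to-\infty}y(s)=0$, and, for some $\varepsilon>0$, $$|x'|\le\varepsilon(x+y+z),\qquad y'+y\le\varepsilon(x+z),\qquad z'-z\ge-\varepsilon(x+y).$$ There exist $\varepsilon_0>0$ and $c>0$ such that if $\varepsilon\le\varepsilon_0$, then $y\le2\varepsilon(x+z)$ on $(-\infty,0]$, and moreover one of the following holds: either there exists $s_*\in(-\infty,0]$ with $z\le8\varepsilon x$ on $(-\infty,s_*]$, or $x\le c\varepsilon z$ on $(-\infty,0]$. *)

From Stdlib Require Import Reals.
Open Scope R_scope.

Fixpoint rsum (f : nat -> R) (n : nat) : R :=
  match n with
  | O => 0
  | S k => rsum f k + f k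
  end.

Definition null_set (N : R -> Prop) : Prop :=
  forall eps, 0 < eps ->
    exists a b : nat -> R,
      (forall n, a n <= b n) /\
      (forall t, N t -> exists n, a n < t < b n) /\
      (forall m, rsum (fun n => b n - a n) m <= eps).

(* Absolute continuity of f on the compact interval [a,b] (Vitali's
   definition, finitely many non-overlapping subintervals listed in order). *)
Definition abs_continuous_on (f : R -> R) (a b : R) : Prop :=
  forall eps, 0 < eps -> exists delta, 0 < delta /\
    forall (n : nat) (u v : nat -> R),
      (forall i, (i < n)%nat -> a <= u i /\ u i <= v i /\ v i <= b) ->
      (forall i, (S i < n)%nat -> v i <= u (S i)) ->
      rsum (fun i => v i - u i) n < delta ->
      rsum (fun i => Rabs (f (v i) - f (u i))) n < eps.

Definition abs_continuous_nonpos (f : R -> R) : Prop :=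
  forall a b, a <= b -> b <= 0 -> abs_continuous_on f a b.

Definition liminf_minfty (f : R -> R) (l : R) : Prop :=
  (forall eps, 0 < eps -> forall M, exists s, s <= M /\ f s < l + eps) /\
  (forall eps, 0 < eps -> exists M, forall s, s <= M -> l - eps < f s).

From Stdlib Require Import Reals Lra Lia Psatz Classical.
From Coquelicot Require Import Rcomplements.
Open Scope R_scope.

(* The engine is a barrier principle: an absolutely continuous f whose derivative is
   nonnegative almost everywhere on {L0 < f < L} never drops below min (f a) L once it
   starts above L0.  It is proved by real induction, the exceptional null set being
   absorbed by absolute continuity.
   The differential inequalities make y - 2 eps (x + z) decrease while it is positive;
   since liminf y = 0 at -oo, it is never positive.  Likewise z - 8 eps x increases
   while positive, so either z <= 8 eps x on a half-line or z > 8 eps x everywhere.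
   In the latter case e^(-s/4) (x - 4 eps z) is nonincreasing and e^(-s/2) z is
   nondecreasing; if x > 4 eps z at some s0, then x >= P e^(s/4) and z <= Q e^(s/2)
   for s <= s0, which contradicts z > 8 eps x as s -> -oo. *)

Lemma rsum_ext f g n : (forall i, (i < n)%nat -> f i = g i) -> rsum f n = rsum g n.
Proof.
  induction n as [|n IH]; intros Hfg; simpl; [reflexivity|].
  rewrite IH by (intros; apply Hfg; lia). now rewrite Hfg by lia.
Qed.

Lemma rsum_le f g n : (forall i, (i < n)%nat -> f i <= g i) -> rsum f n <= rsum g n.
Proof.
  induction n as [|n IH]; intros Hfg; simpl; [lra|].
  assert (rsum f n <= rsum g n) by (apply IH; intros; apply Hfg; lia).
  assert (f n <= g n) by (apply Hfg; lia).
  lra.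
Qed.

Lemma rsum_nonneg f n : (forall i, (i < n)%nat -> 0 <= f i) -> 0 <= rsum f n.
Proof.
  induction n as [|n IH]; intros Hf; simpl; [lra|].
  assert (0 <= rsum f n) by (apply IH; intros; apply Hf; lia).
  assert (0 <= f n) by (apply Hf; lia).
  lra.
Qed.

Lemma rsum_plus f g n : rsum (fun i => f i + g i) n = rsum f n + rsum g n.
Proof. induction n; simpl; lra. Qed.

Lemma rsum_minus f g n : rsum (fun i => f i - g i) n = rsum f n - rsum g n.
Proof. induction n; simpl; lra. Qed.

Lemma rsum_scal c f n : rsum (fun i => c * f i) n = c * rsum f n.
Proof. induction n as [|n IH]; simpl; [ring|]. rewrite IH. ring. Qed.

Lemma rsum_ge_term f n k :
  (forall i, (i < n)%nat -> 0 <= f i) -> (k < n)%nat -> f k <= rsum f n.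
Proof.
  induction n as [|n IH]; intros Hf Hk; [lia|]. simpl.
  assert (0 <= rsum f n) by (apply rsum_nonneg; intros; apply Hf; lia).
  assert (0 <= f n) by (apply Hf; lia).
  destruct (Nat.eq_dec k n) as [->|Hne]; [lra|].
  assert (f k <= rsum f n) by (apply IH; [intros; apply Hf|]; lia).
  lra.
Qed.

Lemma rsum_le_length f n m : (forall i, 0 <= f i) -> (n <= m)%nat -> rsum f n <= rsum f m.
Proof. intros Hf Hnm. induction Hnm as [|m _ IH]; simpl; [lra|]. specialize (Hf m). lra. Qed.

Lemma abs_continuous_on_dominated f g h A B a b :
  abs_continuous_on f a b -> abs_continuous_on g a b -> 0 <= A -> 0 <= B ->
  (forall u v, a <= u -> u <= v -> v <= b ->
     Rabs (h v - h u) <= A * Rabs (f v - f u) + B * Rabs (g v - g u)) ->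
  abs_continuous_on h a b.
Proof.
  intros Hf Hg HA HB Hdom e He.
  set (C := A + B + 1).
  assert (HC : 0 < C) by (unfold C; lra).
  assert (He' : 0 < e / (2 * C)) by (apply Rdiv_lt_0_compat; lra).
  destruct (Hf _ He') as [d1 [Hd1 Hf']].
  destruct (Hg _ He') as [d2 [Hd2 Hg']].
  exists (Rmin d1 d2); split; [now apply Rmin_pos|].
  intros n u v Hin Hord Hlen.
  pose proof (Rmin_l d1 d2); pose proof (Rmin_r d1 d2).
  specialize (Hf' n u v Hin Hord ltac:(lra)).
  specialize (Hg' n u v Hin Hord ltac:(lra)).
  set (Sf := rsum (fun i => Rabs (f (v i) - f (u i))) n) in *.
  set (Sg := rsum (fun i => Rabs (g (v i) - g (u i))) n) in *.
  assert (0 <= Sf) by (apply rsum_nonneg; intros; apply Rabs_pos).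
  assert (0 <= Sg) by (apply rsum_nonneg; intros; apply Rabs_pos).
  assert (HCe : C * (e / (2 * C)) = e / 2) by (field; lra).
  apply Rle_lt_trans with (A * Sf + B * Sg).
  - unfold Sf, Sg. rewrite <- 2!rsum_scal, <- rsum_plus.
    apply rsum_le. intros i Hi. destruct (Hin i Hi) as [? [? ?]]. now apply Hdom.
  - assert (A * Sf + B * Sg <= C * Sf + C * Sg) by (unfold C; nra).
    assert (C * Sf < e / 2) by (rewrite <- HCe; now apply Rmult_lt_compat_l).
    assert (C * Sg < e / 2) by (rewrite <- HCe; now apply Rmult_lt_compat_l).
    lra.
Qed.

Lemma abs_continuous_on_id a b : abs_continuous_on (fun t => t) a b.
Proof.
  intros e He. exists e; split; [exact He|].
  intros n u v Hin _ Hlen. rewrite (rsum_ext _ (fun i => v i - u i)); [exact Hlen|].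
  intros i Hi. destruct (Hin i Hi) as [_ [? _]]. apply Rabs_right. lra.
Qed.

Lemma abs_continuous_on_plus f g a b :
  abs_continuous_on f a b -> abs_continuous_on g a b ->
  abs_continuous_on (fun t => f t + g t) a b.
Proof.
  intros Hf Hg. apply (abs_continuous_on_dominated f g _ 1 1); auto; try lra.
  intros u v _ _ _. rewrite !Rmult_1_l.
  replace (f v + g v - (f u + g u)) with ((f v - f u) + (g v - g u)) by ring.
  apply Rabs_triang.
Qed.

Lemma abs_continuous_on_scal c f a b :
  abs_continuous_on f a b -> abs_continuous_on (fun t => c * f t) a b.
Proof.
  intros Hf. apply (abs_continuous_on_dominated f f _ (Rabs c) 0); auto using Rabs_pos; try lra.
  intros u v _ _ _. rewrite <- Rmult_minus_distr_l, Rabs_mult. lra.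
Qed.

Lemma abs_continuous_on_lipschitz f K a b :
  0 <= K -> (forall u v, a <= u -> u <= v -> v <= b -> Rabs (f v - f u) <= K * Rabs (v - u)) ->
  abs_continuous_on f a b.
Proof.
  intros HK Hf. apply (abs_continuous_on_dominated (fun t => t) (fun t => t) _ K 0);
    auto using abs_continuous_on_id; try lra.
  intros u v Hu Huv Hv. specialize (Hf u v Hu Huv Hv). lra.
Qed.

Lemma abs_continuous_on_bounded f a b :
  a <= b -> abs_continuous_on f a b -> exists F, forall t, a <= t <= b -> Rabs (f t) <= F.
Proof.
  intros Hab Hf. destruct (Hf 1 ltac:(lra)) as [d [Hd Hf']].
  assert (Hstep : forall p q, a <= p <= q -> q <= b -> q - p < d -> Rabs (f q - f p) < 1).
  { intros p q Hp Hq Hpq.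
    specialize (Hf' 1%nat (fun _ => p) (fun _ => q)). simpl in Hf'.
    rewrite !Rplus_0_l in Hf'. apply Hf'; intros; [lra|lia|lra]. }
  assert (Hchain : forall (n : nat) t, a <= t <= b -> t <= a + INR n * (d / 2) ->
            Rabs (f t - f a) <= INR n).
  { induction n as [|n IH]; intros t Ht Htn.
    - simpl in Htn. replace t with a by lra. rewrite Rminus_diag, Rabs_R0. simpl; lra.
    - rewrite S_INR in *. pose proof (pos_INR n).
      destruct (Rle_dec t (a + INR n * (d / 2))) as [Hle|Hgt]; [specialize (IH t Ht Hle); lra|].
      set (t' := a + INR n * (d / 2)).
      assert (Ht' : a <= t' <= t) by (unfold t'; nra).
      specialize (IH t' ltac:(lra) ltac:(unfold t'; lra)).
      assert (Rabs (f t - f t') < 1) by (apply Hstep; unfold t' in *; lra).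
      replace (f t - f a) with ((f t - f t') + (f t' - f a)) by ring.
      pose proof (Rabs_triang (f t - f t') (f t' - f a)). lra. }
  destruct (INR_archimed (d / 2) (b - a)) as [n Hn]; [lra|].
  exists (Rabs (f a) + INR n). intros t Ht.
  assert (Rabs (f t - f a) <= INR n) by (apply Hchain; lra).
  replace (f t) with ((f t - f a) + f a) by ring.
  pose proof (Rabs_triang (f t - f a) (f a)). lra.
Qed.

Lemma abs_continuous_on_mult f g a b :
  a <= b -> abs_continuous_on f a b -> abs_continuous_on g a b ->
  abs_continuous_on (fun t => f t * g t) a b.
Proof.
  intros Hab Hf Hg.
  destruct (abs_continuous_on_bounded f a b Hab Hf) as [F HF].
  destruct (abs_continuous_on_bounded g a b Hab Hg) as [G HG].
  assert (0 <= F) by (specialize (HF a ltac:(lra)); pose proof (Rabs_pos (f a)); lra).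
  assert (0 <= G) by (specialize (HG a ltac:(lra)); pose proof (Rabs_pos (g a)); lra).
  apply (abs_continuous_on_dominated f g _ G F); auto.
  intros u v Hu Huv Hv.
  replace (f v * g v - f u * g u) with ((f v - f u) * g v + f u * (g v - g u)) by ring.
  eapply Rle_trans; [apply Rabs_triang|]. rewrite !Rabs_mult.
  specialize (HF u ltac:(lra)). specialize (HG v ltac:(lra)).
  pose proof (Rabs_pos (f v - f u)). pose proof (Rabs_pos (g v - g u)).
  apply Rplus_le_compat; [rewrite Rmult_comm|]; apply Rmult_le_compat; auto using Rabs_pos; lra.
Qed.

Lemma derivable_pt_lim_exp_scal k t :
  derivable_pt_lim (fun s => exp (k * s)) t (k * exp (k * t)).
Proof.
  rewrite Rmult_comm.
  apply (derivable_pt_lim_comp (fun s => k * s) exp t k).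
  - pose proof (derivable_pt_lim_scal id k t 1 (derivable_pt_lim_id t)) as D.
    rewrite Rmult_1_r in D. exact D.
  - apply derivable_pt_lim_exp.
Qed.

Lemma exp_le u v : u <= v -> exp u <= exp v.
Proof. intros [Huv|<-]; [left; now apply exp_increasing|lra]. Qed.

Lemma abs_continuous_on_exp_scal k a b : abs_continuous_on (fun t => exp (k * t)) a b.
Proof.
  set (E := exp (Rabs k * (Rabs a + Rabs b))).
  apply (abs_continuous_on_lipschitz _ (Rabs k * E)).
  { pose proof (Rabs_pos k); pose proof (exp_pos (Rabs k * (Rabs a + Rabs b))). unfold E; nra. }
  intros u v Hu Huv Hv.
  destruct (MVT_abs (fun t => exp (k * t)) (fun t => k * exp (k * t)) u v) as [c [Hc Hcuv]].
  { intros c _. apply derivable_pt_lim_exp_scal. }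
  rewrite Hc, Rabs_mult, (Rabs_right (exp _)) by (left; apply exp_pos).
  rewrite Rmin_left, Rmax_right in Hcuv by lra.
  apply Rmult_le_compat_r; [apply Rabs_pos|]. apply Rmult_le_compat_l; [apply Rabs_pos|].
  unfold E. apply exp_le.
  apply Rle_trans with (Rabs k * Rabs c); [rewrite <- Rabs_mult; apply RRle_abs|].
  apply Rmult_le_compat_l; [apply Rabs_pos|].
  unfold Rabs; repeat destruct Rcase_abs; lra.
Qed.
Lemma derivable_pt_lim_approx f t d e :
  derivable_pt_lim f t d -> 0 < e ->
  exists rho, 0 < rho /\ forall s, Rabs (s - t) < rho ->
    Rabs (f s - f t - d * (s - t)) <= e * Rabs (s - t).
Proof.
  intros Hd He. destruct (Hd e He) as [[rho Hrho] Hd']. exists rho; split; [exact Hrho|].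
  intros s Hs. destruct (Req_dec s t) as [->|Hst].
  - rewrite !Rminus_diag, Rmult_0_r, Rminus_0_r, Rabs_R0. lra.
  - specialize (Hd' (s - t) ltac:(lra) Hs). simpl in Hd'.
    replace (t + (s - t)) with s in Hd' by ring.
    replace (f s - f t - d * (s - t)) with ((s - t) * ((f s - f t) / (s - t) - d)) by (field; lra).
    rewrite Rabs_mult, Rmult_comm. apply Rmult_le_compat_r; [apply Rabs_pos | lra].
Qed.

Lemma derivable_pt_lim_continuous f t d e :
  derivable_pt_lim f t d -> 0 < e ->
  exists rho, 0 < rho /\ forall s, Rabs (s - t) < rho -> Rabs (f s - f t) < e.
Proof.
  intros Hd He. destruct (derivable_pt_lim_approx f t d 1 Hd Rlt_0_1) as [rho1 [Hrho1 Happrox]].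
  set (C := Rabs d + 2).
  assert (HC : 0 < C) by (unfold C; pose proof (Rabs_pos d); lra).
  exists (Rmin rho1 (e / C)). split; [apply Rmin_pos; [lra | now apply Rdiv_lt_0_compat]|].
  intros s Hs. pose proof (Rmin_l rho1 (e / C)). pose proof (Rmin_r rho1 (e / C)).
  specialize (Happrox s ltac:(lra)).
  pose proof (Rabs_triang (f s - f t - d * (s - t)) (d * (s - t))) as Htri.
  replace (f s - f t - d * (s - t) + d * (s - t)) with (f s - f t) in Htri by ring.
  rewrite Rabs_mult in Htri.
  assert ((Rabs d + 1) * Rabs (s - t) <= C * Rabs (s - t))
    by (apply Rmult_le_compat_r; [apply Rabs_pos | unfold C; lra]).
  assert (C * Rabs (s - t) < C * (e / C)) by (apply Rmult_lt_compat_l; lra).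
  replace (C * (e / C)) with e in * by (field; lra).
  lra.
Qed.

Lemma real_induction (P : R -> Prop) a b :
  a <= b -> P a ->
  (forall t, a <= t <= b -> exists rho, 0 < rho /\
     forall p q, a <= p -> p <= t -> t <= q -> q <= b -> t - rho < p -> q < t + rho ->
       P p -> P q) ->
  P b.
Proof.
  intros Hab Pa Hstep.
  set (E := fun t => a <= t <= b /\ P t).
  destruct (completeness E) as [T [HT_ub HT_least]].
  { exists b. intros t [Ht _]. lra. }
  { exists a. split; [lra | exact Pa]. }
  assert (HaT : a <= T) by (apply HT_ub; split; [lra | exact Pa]).
  assert (HTb : T <= b) by (apply HT_least; intros t [Ht _]; lra).
  destruct (Hstep T ltac:(lra)) as [rho [Hrho Hnear]].
  assert (Hp : exists p, E p /\ T - rho < p).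
  { apply NNPP. intros Hnone. assert (T <= T - rho); [|lra].
    apply HT_least. intros t Et. apply Rnot_lt_le. intros Ht. apply Hnone. now exists t. }
  destruct Hp as [p [[Hp Pp] HpT]].
  assert (p <= T) by (apply HT_ub; now split).
  set (q := Rmin b (T + rho / 2)).
  assert (Hq : T <= q <= b /\ q < T + rho) by (unfold q, Rmin; destruct Rle_dec; lra).
  assert (Pq : P q) by (apply (Hnear p); lra || exact Pp).
  assert (q <= T) by (apply HT_ub; split; [lra | exact Pq]).
  replace b with q; [exact Pq|]. unfold q, Rmin in *. destruct Rle_dec; lra.
Qed.

Definition cover_piece (al be : nat -> R) (n : nat) (t : R) : R :=
  Rmin (Rmax (t - al n) 0) (be n - al n).

Definition covered_length (al be : nat -> R) (K : nat) (t : R) : R :=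
  rsum (fun n => cover_piece al be n t) K.

Lemma cover_piece_nonneg al be n t : al n <= be n -> 0 <= cover_piece al be n t.
Proof. intros. unfold cover_piece, Rmin, Rmax. repeat destruct Rle_dec; lra. Qed.

Lemma cover_piece_le al be n t : al n <= be n -> cover_piece al be n t <= be n - al n.
Proof. intros. unfold cover_piece, Rmin, Rmax. repeat destruct Rle_dec; lra. Qed.

Lemma cover_piece_mono al be n t t' : t <= t' -> cover_piece al be n t <= cover_piece al be n t'.
Proof. intros. unfold cover_piece, Rmin, Rmax. repeat destruct Rle_dec; lra. Qed.

Lemma cover_piece_inside al be n t : al n <= t <= be n -> cover_piece al be n t = t - al n.
Proof. intros. unfold cover_piece, Rmin, Rmax. repeat destruct Rle_dec; lra. Qed.

Lemma covered_length_le al be K t :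
  (forall n, al n <= be n) -> covered_length al be K t <= rsum (fun n => be n - al n) K.
Proof. intros Hab. apply rsum_le. intros n _. apply cover_piece_le, Hab. Qed.

Lemma covered_length_mono al be K t t' :
  t <= t' -> covered_length al be K t <= covered_length al be K t'.
Proof. intros. apply rsum_le. intros n _. now apply cover_piece_mono. Qed.

Lemma covered_length_across al be K n p q :
  (forall n, al n <= be n) -> al n < p -> p <= q -> q < be n ->
  covered_length al be K p + (q - p) <= covered_length al be (Nat.max K (S n)) q.
Proof.
  intros Hab Hp Hpq Hq. unfold covered_length.
  set (K' := Nat.max K (S n)).
  assert (Hlonger : rsum (fun m => cover_piece al be m p) K
                    <= rsum (fun m => cover_piece al be m p) K').
  { apply rsum_le_length; [intros; now apply cover_piece_nonneg | unfold K'; lia]. }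
  assert (Hgain : cover_piece al be n q - cover_piece al be n p
          <= rsum (fun m => cover_piece al be m q - cover_piece al be m p) K').
  { apply (rsum_ge_term (fun m => cover_piece al be m q - cover_piece al be m p));
      [|unfold K'; lia].
    intros m _. pose proof (cover_piece_mono al be m p q Hpq). lra. }
  rewrite rsum_minus in Hgain.
  rewrite (cover_piece_inside al be n q), (cover_piece_inside al be n p) in Hgain by lra.
  lra.
Qed.

Section Barrier.

Variables (f : R -> R) (N : R -> Prop) (a b L0 L' L eta delta : R) (al be : nat -> R).

Let M := Rmin (f a) L'.

Hypotheses (Hab : a <= b) (Heta : 0 < eta) (Hdelta : 0 < delta).
Hypotheses (HL'L : L' < L) (HL0M : L0 < M) (Hroom : eta * (b - a + 1) < (M - L0) / 2).
Hypothesis Hvar : forall n u v,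
  (forall i, (i < n)%nat -> a <= u i /\ u i <= v i /\ v i <= b) ->
  (forall i, (S i < n)%nat -> v i <= u (S i)) ->
  rsum (fun i => v i - u i) n < delta ->
  rsum (fun i => Rabs (f (v i) - f (u i))) n < eta.
Hypotheses (Hcover_ord : forall n, al n <= be n)
  (Hcover : forall t, N t -> exists n, al n < t < be n)
  (Hcover_len : forall m, rsum (fun n => be n - al n) m <= delta / 2).
Hypothesis Hder : forall t, a <= t <= b -> ~ N t ->
  exists d, derivable_pt_lim f t d /\ (L0 < f t -> f t < L -> 0 <= d).

(* The invariant of the real induction: the drops of f below [M - eta * (t - a)]
   are paid for by disjoint subintervals of [a, t] lying inside the cover of [N],
   so absolute continuity keeps their total variation below [eta]. *)
Definition controlled (t : R) : Prop :=
  exists m u v K,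
    (forall i, (i < m)%nat -> a <= u i /\ u i <= v i /\ v i <= t) /\
    (forall i, (S i < m)%nat -> v i <= u (S i)) /\
    rsum (fun i => v i - u i) m <= covered_length al be K t /\
    M - eta * (t - a) - rsum (fun i => Rabs (f (v i) - f (u i))) m <= f t.

Lemma controlled_lower_bound t : t <= b -> controlled t -> M - eta * (b - a + 1) < f t.
Proof.
  intros Htb [m [u [v [K [Hin [Hord [Hlen Hft]]]]]]].
  assert (Hsmall : rsum (fun i => Rabs (f (v i) - f (u i))) m < eta).
  { apply Hvar; [|exact Hord|].
    - intros i Hi. destruct (Hin i Hi) as [? [? ?]]. lra.
    - pose proof (covered_length_le al be K t Hcover_ord). pose proof (Hcover_len K). lra. }
  assert (eta * (t - a) <= eta * (b - a)) by (apply Rmult_le_compat_l; lra).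
  lra.
Qed.

Lemma controlled_restart t : M - eta * (t - a) <= f t -> controlled t.
Proof.
  intros Ht. exists 0%nat, (fun _ => 0), (fun _ => 0), 0%nat. simpl.
  split; [intros; lia|]. split; [intros; lia|].
  unfold covered_length. simpl. lra.
Qed.

Lemma controlled_start : controlled a.
Proof. apply controlled_restart. pose proof (Rmin_l (f a) L'). unfold M. lra. Qed.

Lemma controlled_keep p q : p <= q -> f p - eta * (q - p) <= f q -> controlled p -> controlled q.
Proof.
  intros Hpq Hfq [m [u [v [K [Hin [Hord [Hlen Hfp]]]]]]].
  exists m, u, v, K. split; [|split; [exact Hord|split]].
  - intros i Hi. destruct (Hin i Hi) as [? [? ?]]. lra.
  - pose proof (covered_length_mono al be K p q Hpq). lra.
  - lra.
Qed.

Lemma controlled_across_cover n p q :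
  a <= p -> al n < p -> p <= q -> q < be n -> controlled p -> controlled q.
Proof.
  intros Hap Hp Hpq Hq [m [u [v [K [Hin [Hord [Hlen Hfp]]]]]]].
  set (u' := fun i => if Nat.ltb i m then u i else p).
  set (v' := fun i => if Nat.ltb i m then v i else q).
  assert (Hold : forall i, (i < m)%nat -> u' i = u i /\ v' i = v i)
    by (intros i Hi; unfold u', v'; destruct (Nat.ltb_spec i m); [auto | lia]).
  exists (S m), u', v', (Nat.max K (S n)). simpl.
  rewrite (rsum_ext (fun i => v' i - u' i) (fun i => v i - u i)),
    (rsum_ext (fun i => Rabs (f (v' i) - f (u' i))) (fun i => Rabs (f (v i) - f (u i))))
    by (intros i Hi; now destruct (Hold i Hi) as [-> ->]).
  unfold u', v'. rewrite Nat.ltb_irrefl.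
  split; [|split; [|split]].
  - intros i Hi. destruct (Nat.ltb_spec i m) as [Him|]; [|lra].
    destruct (Hin i Him) as [? [? ?]]. lra.
  - intros i Hi. destruct (Nat.ltb_spec i m); [|lia].
    destruct (Nat.ltb_spec (S i) m); [now apply Hord|].
    replace m with (S i) in * by lia. destruct (Hin i ltac:(lia)) as [? [? ?]]. lra.
  - pose proof (covered_length_across al be K n p q Hcover_ord Hp Hpq Hq). lra.
  - pose proof (Rle_abs (- (f q - f p))). rewrite Rabs_Ropp in *.
    assert (eta * (p - a) <= eta * (q - a)) by (apply Rmult_le_compat_l; lra).
    lra.
Qed.

Lemma controlled_near_regular t : a <= t <= b -> ~ N t ->
  exists rho, 0 < rho /\ forall p q, p <= t -> t <= q -> q <= b ->
    t - rho < p -> q < t + rho -> controlled p -> controlled q.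
Proof.
  intros Ht HNt. destruct (Hder t Ht HNt) as [d [Hd Hsign]].
  destruct (derivable_pt_lim_approx f t d eta Hd Heta) as [rho1 [Hrho1 Happrox]].
  set (margin := Rmin ((M - L0) / 2) (L - L')).
  assert (Hmargin : 0 < margin) by (unfold margin; apply Rmin_pos; lra).
  assert (Hmargin_le : margin <= (M - L0) / 2 /\ margin <= L - L')
    by (split; [apply Rmin_l | apply Rmin_r]).
  destruct (derivable_pt_lim_continuous f t d margin Hd Hmargin) as [rho2 [Hrho2 Hclose]].
  set (rho := Rmin rho1 rho2).
  assert (Hrho : 0 < rho) by (now apply Rmin_pos).
  assert (Hrho_le : rho <= rho1 /\ rho <= rho2) by (split; [apply Rmin_l | apply Rmin_r]).
  exists rho. split; [exact Hrho|].
  intros p q Hpt Htq Hqb Hp Hq Hctl.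
  assert (Hfp : L0 + (M - L0) / 2 < f p)
    by (pose proof (controlled_lower_bound p ltac:(lra) Hctl); lra).
  assert (Hpt' : Rabs (p - t) < rho) by (rewrite Rabs_left1; lra).
  assert (Hqt' : Rabs (q - t) < rho) by (rewrite Rabs_right; lra).
  pose proof (proj1 (Rabs_lt_between _ _) (Hclose p ltac:(lra))) as Hp_close.
  pose proof (proj1 (Rabs_lt_between _ _) (Hclose q ltac:(lra))) as Hq_close.
  destruct (Rlt_le_dec (f t) L) as [HfL|HfL].
  - assert (Hd0 : 0 <= d) by (apply Hsign; lra).
    assert (Hp_approx := proj1 (Rabs_le_between _ _) (Happrox p ltac:(lra))).
    assert (Hq_approx := proj1 (Rabs_le_between _ _) (Happrox q ltac:(lra))).
    rewrite Rabs_left1 in Hp_approx by lra. rewrite Rabs_right in Hq_approx by lra.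
    apply (controlled_keep p); [lra | | exact Hctl].
    assert (0 <= d * (q - t)) by (apply Rmult_le_pos; lra).
    assert (0 <= d * (t - p)) by (apply Rmult_le_pos; lra).
    lra.
  - apply controlled_restart.
    assert (0 <= eta * (q - a)) by (apply Rmult_le_pos; lra).
    pose proof (Rmin_r (f a) L'). unfold M in *. lra.
Qed.

Lemma controlled_end : controlled b.
Proof.
  apply (real_induction controlled a b Hab controlled_start).
  intros t Ht. destruct (classic (N t)) as [HNt|HNt].
  - destruct (Hcover t HNt) as [n Hn].
    exists (Rmin (t - al n) (be n - t)). split; [apply Rmin_pos; lra|].
    intros p q Hap Hpt Htq Hqb Hp Hq.
    pose proof (Rmin_l (t - al n) (be n - t)). pose proof (Rmin_r (t - al n) (be n - t)).
    apply (controlled_across_cover n); lra.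
  - destruct (controlled_near_regular t Ht HNt) as [rho [Hrho Hnear]].
    exists rho. split; [exact Hrho|]. intros p q _. apply Hnear.
Qed.

Lemma barrier_lower_bound : M - eta * (b - a + 1) < f b.
Proof. exact (controlled_lower_bound b (Rle_refl b) controlled_end). Qed.

End Barrier.

Lemma ac_barrier f N a b L0 L :
  a <= b -> abs_continuous_on f a b -> null_set N -> L0 < Rmin (f a) L ->
  (forall t, a <= t <= b -> ~ N t ->
     exists d, derivable_pt_lim f t d /\ (L0 < f t -> f t < L -> 0 <= d)) ->
  Rmin (f a) L <= f b.
Proof.
  intros Hab Hac HN HL0 Hder. apply Rnot_lt_le. intros Hfb.
  set (L' := (Rmax (f b) L0 + Rmin (f a) L) / 2).
  assert (HL' : f b < L' /\ L0 < L' /\ L' < Rmin (f a) L)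
    by (unfold L', Rmax; destruct Rle_dec; lra).
  pose proof (Rmin_l (f a) L). pose proof (Rmin_r (f a) L).
  assert (HM : Rmin (f a) L' = L') by (apply Rmin_right; lra).
  set (gap := Rmin (L' - L0) (L' - f b)).
  assert (Hgap : 0 < gap /\ gap <= L' - L0 /\ gap <= L' - f b)
    by (unfold gap; split; [apply Rmin_pos|split; [apply Rmin_l|apply Rmin_r]]; lra).
  set (eta := gap / (4 * (b - a + 1))).
  assert (Heta : 0 < eta) by (apply Rdiv_lt_0_compat; lra).
  assert (Hroom : eta * (b - a + 1) = gap / 4) by (unfold eta; field; lra).
  destruct (Hac eta Heta) as [delta [Hdelta Hvar]].
  destruct (HN (delta / 2)) as [al [be [Hord [Hcov Hlen]]]]; [lra|].
  assert (Hbar : Rmin (f a) L' - eta * (b - a + 1) < f b).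
  { apply (barrier_lower_bound f N a b L0 L' L eta delta al be); auto; rewrite ?HM; lra. }
  rewrite HM in Hbar. lra.
Qed.

Lemma ac_nondecreasing f N a b :
  a <= b -> abs_continuous_on f a b -> null_set N ->
  (forall t, a <= t <= b -> ~ N t -> exists d, derivable_pt_lim f t d /\ 0 <= d) ->
  f a <= f b.
Proof.
  intros Hab Hac HN Hder.
  rewrite <- (Rmin_left (f a) (f a + 1)) by lra.
  apply (ac_barrier f N a b (f a - 1)); auto.
  - rewrite Rmin_left; lra.
  - intros t Ht HNt. destruct (Hder t Ht HNt) as [d [Hd Hd0]]. now exists d.
Qed.

Lemma exp_weighted_nondecreasing f N k a b :
  a <= b -> abs_continuous_on f a b -> null_set N ->
  (forall t, a <= t <= b -> ~ N t -> exists d, derivable_pt_lim f t d /\ 0 <= d + k * f t) ->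
  exp (k * a) * f a <= exp (k * b) * f b.
Proof.
  intros Hab Hac HN Hder.
  apply (ac_nondecreasing (fun t => exp (k * t) * f t) N); auto.
  - apply abs_continuous_on_mult; auto using abs_continuous_on_exp_scal.
  - intros t Ht HNt. destruct (Hder t Ht HNt) as [d [Hd Hsign]].
    exists (k * exp (k * t) * f t + exp (k * t) * d). split.
    + exact (derivable_pt_lim_mult _ _ t _ _ (derivable_pt_lim_exp_scal k t) Hd).
    + pose proof (exp_pos (k * t)).
      replace (k * exp (k * t) * f t + exp (k * t) * d) with (exp (k * t) * (d + k * f t)) by ring.
      now apply Rmult_le_pos; [lra|].
Qed.

Lemma y_excess_slope e x y z dx dy dz :
  0 < e -> e <= 1/100 -> 0 <= x -> 0 <= y -> 0 <= z ->
  Rabs dx <= e * (x + y + z) -> dy + y <= e * (x + z) -> dz - z >= - e * (x + y) ->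
  2 * e * (x + z) < y -> dy - 2 * e * (dx + dz) <= 0.
Proof. intros ? ? ? ? ? Hdx. apply Rabs_le_between in Hdx. intros. nra. Qed.

Lemma z_dominance_slope e x y z dx dz :
  0 < e -> e <= 1/100 -> 0 <= x -> 0 <= y -> 0 <= z ->
  Rabs dx <= e * (x + y + z) -> dz - z >= - e * (x + y) ->
  y <= 2 * e * (x + z) -> 8 * e * x < z -> 0 <= dz - 8 * e * dx.
Proof. intros ? ? ? ? ? Hdx. apply Rabs_le_between in Hdx. intros. nra. Qed.

Lemma x_excess_slope e x y z dx dz :
  0 < e -> e <= 1/100 -> 0 <= x -> 0 <= y -> 0 <= z ->
  Rabs dx <= e * (x + y + z) -> dz - z >= - e * (x + y) ->
  y <= 2 * e * (x + z) -> dx - 4 * e * dz <= (x - 4 * e * z) / 4.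
Proof. intros ? ? ? ? ? Hdx. apply Rabs_le_between in Hdx. intros. nra. Qed.

Lemma z_growth_slope e x y z dz :
  0 < e -> e <= 1/100 -> 0 <= x -> 0 <= y -> 0 <= z ->
  dz - z >= - e * (x + y) -> y <= 2 * e * (x + z) -> 8 * e * x < z -> z / 2 <= dz.
Proof. intros. nra. Qed.

Section Trichotomy.

Variables (x y z : R -> R) (N : R -> Prop) (eps : R).

Hypotheses (Hx : abs_continuous_nonpos x) (Hy : abs_continuous_nonpos y)
  (Hz : abs_continuous_nonpos z).
Hypothesis Hnonneg : forall s, s <= 0 -> 0 <= x s /\ 0 <= y s /\ 0 <= z s.
Hypotheses (Heps : 0 < eps) (Heps_small : eps <= 1/100) (HN : null_set N).
Hypothesis Hderiv : forall s, s <= 0 -> ~ N s ->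
  exists dx dy dz : R,
    derivable_pt_lim x s dx /\ derivable_pt_lim y s dy /\ derivable_pt_lim z s dz /\
    Rabs dx <= eps * (x s + y s + z s) /\
    dy + y s <= eps * (x s + z s) /\
    dz - z s >= - eps * (x s + y s).
Hypothesis Hlim : liminf_minfty y 0.

Let comb (a b c t : R) : R := a * x t + b * y t + c * z t.

Lemma comb_abs_continuous a b c s t : s <= t -> t <= 0 -> abs_continuous_on (comb a b c) s t.
Proof.
  intros Hst Ht. unfold comb.
  repeat apply abs_continuous_on_plus; apply abs_continuous_on_scal;
    [apply Hx | apply Hy | apply Hz]; lra.
Qed.

Lemma comb_derivable a b c t : t <= 0 -> ~ N t ->
  exists dx dy dz,
    derivable_pt_lim (comb a b c) t (a * dx + b * dy + c * dz) /\
    Rabs dx <= eps * (x t + y t + z t) /\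
    dy + y t <= eps * (x t + z t) /\
    dz - z t >= - eps * (x t + y t).
Proof.
  intros Ht HNt. destruct (Hderiv t Ht HNt) as [dx [dy [dz [Dx [Dy [Dz Hbounds]]]]]].
  exists dx, dy, dz. split; [|exact Hbounds].
  unfold comb. repeat apply derivable_pt_lim_plus; now apply derivable_pt_lim_scal.
Qed.

Lemma y_small s : s <= 0 -> y s <= 2 * eps * (x s + z s).
Proof.
  intros Hs0. apply Rnot_lt_le. intros Hexcess.
  set (w := y s - 2 * eps * (x s + z s)).
  destruct (proj1 Hlim (w / 2) ltac:(unfold w; lra) s) as [s1 [Hs1 Hys1]].
  destruct (Hnonneg s1 ltac:(lra)) as [Hx1 [Hy1 Hz1]].
  set (f := comb (2 * eps) (-1) (2 * eps)).
  assert (Hf1 : - (w / 2) < f s1).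
  { unfold f, comb. assert (0 <= eps * (x s1 + z s1)) by (apply Rmult_le_pos; lra). lra. }
  assert (Hbar : Rmin (f s1) 0 <= f s).
  { apply (ac_barrier f N s1 s (- w)); [lra | apply comb_abs_continuous; lra | exact HN | |].
    - unfold Rmin. destruct Rle_dec; unfold w in *; lra.
    - intros t Ht HNt.
      destruct (comb_derivable (2 * eps) (-1) (2 * eps) t ltac:(lra) HNt)
        as [dx [dy [dz [Dt [Hdx [Hdy Hdz]]]]]].
      eexists. split; [exact Dt|]. intros _ Hft.
      destruct (Hnonneg t ltac:(lra)) as [Hxt [Hyt Hzt]].
      unfold f, comb in Hft.
      pose proof (y_excess_slope eps (x t) (y t) (z t) dx dy dz
                    Heps Heps_small Hxt Hyt Hzt Hdx Hdy Hdz ltac:(lra)).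
      lra. }
  unfold Rmin in Hbar. destruct Rle_dec in Hbar; unfold f, comb, w in *; lra.
Qed.

Lemma z_dominance_persists s1 s : s1 <= s -> s <= 0 -> 8 * eps * x s1 < z s1 -> 8 * eps * x s < z s.
Proof.
  intros Hs1 Hs Hdom1.
  set (f := comb (- (8 * eps)) 0 1).
  assert (Hbar : Rmin (f s1) (f s1 + 1) <= f s).
  { apply (ac_barrier f N s1 s 0); [lra | apply comb_abs_continuous; lra | exact HN | |].
    - rewrite Rmin_left; unfold f, comb; lra.
    - intros t Ht HNt.
      destruct (comb_derivable (- (8 * eps)) 0 1 t ltac:(lra) HNt)
        as [dx [dy [dz [Dt [Hdx [_ Hdz]]]]]].
      eexists. split; [exact Dt|]. intros Hft _.
      destruct (Hnonneg t ltac:(lra)) as [Hxt [Hyt Hzt]].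
      unfold f, comb in Hft.
      pose proof (z_dominance_slope eps (x t) (y t) (z t) dx dz Heps Heps_small
                    Hxt Hyt Hzt Hdx Hdz (y_small t ltac:(lra)) ltac:(lra)).
      lra. }
  rewrite Rmin_left in Hbar by lra. unfold f, comb in Hbar. lra.
Qed.

Lemma z_dominance_everywhere :
  ~ (exists sstar, sstar <= 0 /\ forall s, s <= sstar -> z s <= 8 * eps * x s) ->
  forall t, t <= 0 -> 8 * eps * x t < z t.
Proof.
  intros Hnever t Ht. apply NNPP. intros Hfail. apply Hnever.
  exists t. split; [exact Ht|]. intros s Hs. apply Rnot_lt_le. intros Hdom.
  apply Hfail. now apply (z_dominance_persists s t).
Qed.

Lemma x_excess_weighted s s0 : s <= s0 -> s0 <= 0 ->
  exp (- (1/4) * s0) * (x s0 - 4 * eps * z s0) <= exp (- (1/4) * s) * (x s - 4 * eps * z s).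
Proof.
  intros Hss0 Hs0. set (f := comb (-1) 0 (4 * eps)).
  assert (Hmono : exp (- (1/4) * s) * f s <= exp (- (1/4) * s0) * f s0).
  { apply (exp_weighted_nondecreasing f N); [lra | apply comb_abs_continuous; lra | exact HN |].
    intros t Ht HNt.
    destruct (comb_derivable (-1) 0 (4 * eps) t ltac:(lra) HNt)
      as [dx [dy [dz [Dt [Hdx [_ Hdz]]]]]].
    eexists. split; [exact Dt|].
    destruct (Hnonneg t ltac:(lra)) as [Hxt [Hyt Hzt]].
    pose proof (x_excess_slope eps (x t) (y t) (z t) dx dz Heps Heps_small
                  Hxt Hyt Hzt Hdx Hdz (y_small t ltac:(lra))).
    unfold f, comb. lra. }
  unfold f, comb in Hmono. lra.
Qed.

Lemma z_weighted (Hdom : forall t, t <= 0 -> 8 * eps * x t < z t) s s0 :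
  s <= s0 -> s0 <= 0 -> exp (- (1/2) * s) * z s <= exp (- (1/2) * s0) * z s0.
Proof.
  intros Hss0 Hs0. apply (exp_weighted_nondecreasing z N); [lra | apply Hz; lra | exact HN |].
  intros t Ht HNt.
  destruct (Hderiv t ltac:(lra) HNt) as [dx [dy [dz [_ [_ [Dz [_ [_ Hdz]]]]]]]].
  exists dz. split; [exact Dz|].
  destruct (Hnonneg t ltac:(lra)) as [Hxt [Hyt Hzt]].
  pose proof (z_growth_slope eps (x t) (y t) (z t) dz Heps Heps_small
                Hxt Hyt Hzt Hdz (y_small t ltac:(lra)) (Hdom t ltac:(lra))).
  lra.
Qed.

Lemma x_small (Hdom : forall t, t <= 0 -> 8 * eps * x t < z t) s0 :
  s0 <= 0 -> x s0 <= 4 * eps * z s0.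
Proof.
  intros Hs0. apply Rnot_lt_le. intros Hexcess.
  set (P := exp (- (1/4) * s0) * (x s0 - 4 * eps * z s0)).
  set (Q := exp (- (1/2) * s0) * z s0).
  destruct (Hnonneg s0 Hs0) as [Hx0 [Hy0 Hz0]].
  assert (HP : 0 < P) by (apply Rmult_lt_0_compat; [apply exp_pos | lra]).
  assert (HQ : 0 < Q).
  { apply Rmult_lt_0_compat; [apply exp_pos|].
    pose proof (Hdom s0 Hs0). assert (0 <= eps * x s0) by (apply Rmult_le_pos; lra). lra. }
  (* Far enough to the left, e^(s/4) <= 8 eps P / Q. *)
  set (r := 8 * eps * P / Q).
  assert (Hr : 0 < r) by (apply Rdiv_lt_0_compat; [apply Rmult_lt_0_compat|]; lra).
  set (s := Rmin s0 (4 * ln r)).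
  assert (Hs : s <= s0 /\ s <= 4 * ln r) by (split; [apply Rmin_l | apply Rmin_r]).
  set (E := exp ((1/4) * s)).
  assert (HE : 0 < E) by apply exp_pos.
  assert (HEr : E <= r) by (rewrite <- (exp_ln r Hr); apply exp_le; lra).
  assert (HE1 : exp (- (1/4) * s) * E = 1)
    by (unfold E; rewrite <- exp_plus, <- exp_0; f_equal; lra).
  assert (HE2 : exp (- (1/2) * s) * (E * E) = 1)
    by (unfold E; rewrite <- !exp_plus, <- exp_0; f_equal; lra).
  pose proof (x_excess_weighted s s0 (proj1 Hs) Hs0) as HxP.
  pose proof (z_weighted Hdom s s0 (proj1 Hs) Hs0) as HzQ.
  fold P in HxP. fold Q in HzQ.
  destruct (Hnonneg s ltac:(lra)) as [Hxs [Hys Hzs]].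
  assert (Hx_lower : P * E <= x s).
  { assert (Hx_eq : x s - 4 * eps * z s = exp (- (1/4) * s) * (x s - 4 * eps * z s) * E).
    { transitivity ((x s - 4 * eps * z s) * (exp (- (1/4) * s) * E)); [rewrite HE1 | ]; ring. }
    assert (P * E <= x s - 4 * eps * z s); [|nra].
    rewrite Hx_eq. apply Rmult_le_compat_r; lra. }
  assert (Hz_upper : z s <= Q * (E * E)).
  { assert (Hz_eq : z s = exp (- (1/2) * s) * z s * (E * E)).
    { transitivity (z s * (exp (- (1/2) * s) * (E * E))); [rewrite HE2 | ]; ring. }
    rewrite Hz_eq. apply Rmult_le_compat_r; nra. }
  assert (Q * (E * E) <= Q * E * r) by (rewrite <- Rmult_assoc; apply Rmult_le_compat_l; nra).
  assert (Q * E * r = 8 * eps * (P * E)) by (unfold r; field; lra).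
  pose proof (Hdom s ltac:(lra)).
  assert (8 * eps * (P * E) <= 8 * eps * x s) by (apply Rmult_le_compat_l; lra).
  lra.
Qed.

End Trichotomy.

Theorem lemmaB1 :
  exists eps0 c : R, 0 < eps0 /\ 0 < c /\
  forall (x y z : R -> R) (eps : R),
    abs_continuous_nonpos x ->
    abs_continuous_nonpos y ->
    abs_continuous_nonpos z ->
    (forall s, s <= 0 -> 0 <= x s /\ 0 <= y s /\ 0 <= z s) ->
    (forall s, s <= 0 -> 0 < x s + y s + z s) ->
    liminf_minfty y 0 ->
    0 < eps ->
    (exists N : R -> Prop, null_set N /\
       forall s, s <= 0 -> ~ N s ->
         exists dx dy dz : R,
           derivable_pt_lim x s dx /\ derivable_pt_lim y s dy /\
           derivable_pt_lim z s dz /\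
           Rabs dx <= eps * (x s + y s + z s) /\
           dy + y s <= eps * (x s + z s) /\
           dz - z s >= - eps * (x s + y s)) ->
    eps <= eps0 ->
    (forall s, s <= 0 -> y s <= 2 * eps * (x s + z s)) /\
    ((exists sstar, sstar <= 0 /\
        forall s, s <= sstar -> z s <= 8 * eps * x s) \/
     (forall s, s <= 0 -> x s <= c * eps * z s)).
Proof.
  exists (1/100), 4. split; [lra|]. split; [lra|].
  intros x y z eps Hx Hy Hz Hnonneg _ Hlim Heps [N [HN Hderiv]] Heps_small.
  split; [intros s Hs; now apply (y_small x y z N eps)|].
  destruct (classic (exists sstar, sstar <= 0 /\ forall s, s <= sstar -> z s <= 8 * eps * x s))
    as [Hsstar|Hnever]; [now left|right].
  intros s Hs.
  apply (x_small x y z N eps); auto.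
  now apply (z_dominance_everywhere x y z N eps).
Qed.
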